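(* Let $H$ be the 28-element set $H=\{n_M : n\in\mathbb{Z}_{12}\}\cup\{n_m : n\in\mathbb{Z}_{12}\}\cup\{n_{\mathrm{aug}} : n\in\{0,1,2,3\}\}$, and define three relations on $H$: - $\mathcal{P}$ is the symmetric relation consisting exactly of the pairs $(n_M,n_m)$ and $(n_m,n_M)$ for $n\in\mathbb{Z}_{12}$, together with the pairs $(n_{\mathrm{aug}},n_{\mathrm{aug}})$ for $0\le n\le 3$; - $\mathcal{L}$ is the symmetric relation consisting exactly of the pairs $(n_M,(n+4)_m)$ and $((n+4)_m,n_M)$ for $n\in\mathbb{Z}_{12}$, together with the pairs $(n_{\mathrm{aug}},n_{\mathrm{aug}})$ for $0\le n\le 3$; - $\mathcal{U}$ is the symmetric relation consisting exactly of the pairs $(n_M,(n \bmod 4)_{\mathrm{aug}})$, $(n_m,((n+3)\bmod 4)_{\mathrm{aug}})$ for $n\in\mathbb{Z}_{12}$, together with their reverses. Let $M_{\mathcal{UPL}}$ be the monoid of relations on $H$ generated by $\mathcal{U},\mathcal{P},\mathcal{L}$ under composition of relations (with identity $e$ the identity relation). Then $M_{\mathcal{UPL}}$ has 40 elements and has the presentation $$M_{\mathcal{UPL}}=\langle \mathcal{U},\mathcal{P},\mathcal{L}\mid \mathcal{P}^2=\mathcal{L}^2=e,\ \mathcal{LPL}=\mathcal{PLP},\ \mathcal{U}^3=\mathcal{U},\ \mathcal{UP}=\mathcal{UL},\ \mathcal{PU}=\mathcal{LU},\ \mathcal{U}^2\mathcal{PU}^2=\mathcal{P}\mathcal{U}^2\mathcal{PU}^2\mathcal{P},\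 (\mathcal{UP})^2\mathcal{U}^2=\mathcal{P}(\mathcal{UP})^2\mathcal{U}^2\mathcal{P},\ \mathcal{U}^2(\mathcal{PU})^2=\mathcal{P}\mathcal{U}^2(\mathcal{PU})^2\mathcal{P}\rangle.$$
   Context: Indices $n$ of $n_M,n_m$ are taken modulo 12. The elements of $H$ are formal labels (musically, $n_M$ is the major triad $\{n,n+4,n+7\}$, $n_m$ the minor triad $\{n,n+3,n+7\}$, and $k_{\mathrm{aug}}$ the augmented triad $\{k,k+4,k+8\}$, all in $\mathbb{Z}_{12}$). Composition of relations: for relations $\mathcal{R},\mathcal{R}'$ on $H$, $\mathcal{R}'\mathcal{R}=\mathcal{R}'\circ\mathcal{R}$ is the set of pairs $(x,z)$ such that there exists $y$ with $(x,y)\in\mathcal{R}$ and $(y,z)\in\mathcal{R}'$. Juxtaposition of words in the presentation denotes this composition. *)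

From Stdlib Require List.
From mathcomp Require Import all_boot.
Set Implicit Arguments. Unset Strict Implicit. Unset Printing Implicit Defensive.

(* H = {n_M} (12) + {n_m} (12) + {k_aug, k = 0..3} (4) *)
Definition H : finType := ('I_12 + 'I_12 + 'I_4)%type.

Definition hrel := {set (H * H)}.

Definition relP (x y : H) : bool :=
  match x, y with
  | inl (inl n), inl (inr m) => val n == val m
  | inl (inr n), inl (inl m) => val n == val m
  | inr k, inr l => val k == val l
  | _, _ => false
  end.

Definition relL (x y : H) : bool :=
  match x, y with
  | inl (inl n), inl (inr m) => val m == (val n + 4) %% 12
  | inl (inr m), inl (inl n) => val m == (val n + 4) %% 12
  | inr k, inr l => val k == val l
  | _, _ => false
  end.

Definition relU (x y : H) : bool :=
  match x, y with
  | inl (inl n), inr k => val k == val n %% 4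
  | inr k, inl (inl n) => val k == val n %% 4
  | inl (inr n), inr k => val k == (val n + 3) %% 4
  | inr k, inl (inr n) => val k == (val n + 3) %% 4
  | _, _ => false
  end.

Definition Prel : hrel := [set p | relP p.1 p.2].
Definition Lrel : hrel := [set p | relL p.1 p.2].
Definition Urel : hrel := [set p | relU p.1 p.2].

Definition idrel : hrel := [set p | p.1 == p.2].

(* comp R' R = R' R = R' o R = {(x,z) | exists y, (x,y) in R /\ (y,z) in R'} *)
Definition comp (R' R : hrel) : hrel :=
  [set p | [exists y : H, ((p.1, y) \in R) && ((y, p.2) \in R')]].

Inductive gen := gU | gP | gL.

Definition gen_rel (g : gen) : hrel :=
  match g with gU => Urel | gP => Prel | gL => Lrel end.

(* the word [:: a1; ...; ak] denotes the juxtaposition a1 a2 ... ak *)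
Fixpoint eval (w : seq gen) : hrel :=
  match w with
  | [::] => idrel
  | g :: w' => comp (gen_rel g) (eval w')
  end.

Definition inM (R : hrel) : Prop := exists w : seq gen, eval w = R.

Definition U := gU. Definition P := gP. Definition L := gL.
Definition presentation_rels : seq (seq gen * seq gen) :=
  [:: ([:: P; P], [::]);
      ([:: L; L], [::]);
      ([:: L; P; L], [:: P; L; P]);
      ([:: U; U; U], [:: U]);
      ([:: U; P], [:: U; L]);
      ([:: P; U], [:: L; U]);
      ([:: U; U; P; U; U], [:: P; U; U; P; U; U; P]);
      ([:: U; P; U; P; U; U], [:: P; U; P; U; P; U; U; P]);
      ([:: U; U; P; U; P; U], [:: P; U; U; P; U; P; U; P])].

Inductive pres_cong : seq gen -> seq gen -> Prop :=
  | pc_rel : forall (l r u v : seq gen), List.In (l, r) presentation_rels ->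
      pres_cong (u ++ l ++ v) (u ++ r ++ v)
  | pc_refl : forall w, pres_cong w w
  | pc_sym : forall w1 w2, pres_cong w1 w2 -> pres_cong w2 w1
  | pc_trans : forall w1 w2 w3, pres_cong w1 w2 -> pres_cong w2 w3 -> pres_cong w1 w3.

From mathcomp Require Import all_boot.
From HB Require Import structures.
From Stdlib Require List.
Set Implicit Arguments. Unset Strict Implicit. Unset Printing Implicit Defensive.

(* Orienting the defining relations by shortlex order and running Knuth-Bendix
   completion gives a rewriting system of 19 rules, each a consequence of the
   presentation.  Its irreducible words are 40 words of length at most 8, and
   every word rewrites to one of them.  The defining relations hold in M_UPL and
   the 40 normal forms evaluate to pairwise distinct relations on H, so two words
   are congruent iff they have the same normal form iff they define the same
   relation. *)

Section Rewriting.

Variable T : eqType.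
Implicit Types (w : seq T) (rules : seq (seq T * seq T)).

Definition rewrites rules w : seq (seq T) :=
  flatten [seq [seq take i w ++ lr.2 ++ drop (i + size lr.1) w
               | i <- iota 0 (size w).+1 & prefix lr.1 (drop i w)] | lr <- rules].

Lemma rewritesP rules w w' : w' \in rewrites rules w ->
  exists u v l r, [/\ (l, r) \in rules, w = u ++ l ++ v & w' = u ++ r ++ v].
Proof.
case/flattenP=> _ /mapP [[l r] lr_in ->] /mapP [i]; rewrite mem_filter /=.
case/andP=> /prefixP [v def_v] _ ->.
exists (take i w), v, l, r; split=> //; last by rewrite addnC -drop_drop def_v drop_size_cat.
by rewrite -def_v cat_take_drop.
Qed.

Fixpoint normalize rules n w : seq T :=
  if n is n'.+1 then
    if rewrites rules w is w' :: _ then normalize rules n' w' else w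
  else w.

Definition joined_from rules n w (lr : seq T * seq T) : bool :=
  let ds := [seq normalize rules n v | v <- rewrites rules w] in
  (lr.1 \in ds) && (lr.2 \in ds).

Fixpoint completes rules n (cs : seq (seq T * (seq T * seq T))) : bool :=
  if cs is (w, lr) :: cs' then joined_from rules n w lr && completes (rcons rules lr) n cs'
  else true.

Variable e : seq T -> seq T -> Prop.
Hypotheses (e_refl : forall w, e w w) (e_sym : forall w1 w2, e w1 w2 -> e w2 w1)
  (e_trans : forall w1 w2 w3, e w1 w2 -> e w2 w3 -> e w1 w3)
  (e_ctx : forall u v w1 w2, e w1 w2 -> e (u ++ w1 ++ v) (u ++ w2 ++ v)).

Definition valid rules := forall l r, (l, r) \in rules -> e l r.

Lemma valid_rewrites rules w w' : valid rules -> w' \in rewrites rules w -> e w w'.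
Proof. by move=> ok /rewritesP [u [v [l [r [/ok lr -> ->]]]]]; apply: e_ctx. Qed.

Lemma valid_normalize rules n w : valid rules -> e w (normalize rules n w).
Proof.
move=> ok; elim: n w => [|n IH] w //=.
case rw: (rewrites rules w) => [|w' ws] //.
by apply: e_trans (IH w'); apply: (valid_rewrites ok); rewrite rw mem_head.
Qed.

Lemma valid_joined_from rules n w l r :
  valid rules -> joined_from rules n w (l, r) -> e l r.
Proof.
move=> ok; rewrite /joined_from /= => /andP [/mapP [v1 v1_in ->] /mapP [v2 v2_in ->]].
have e_w v : v \in rewrites rules w -> e w (normalize rules n v).
  by move=> v_in; apply: e_trans (valid_rewrites ok v_in) (valid_normalize _ _ ok).
exact: e_trans (e_sym (e_w _ v1_in)) (e_w _ v2_in).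
Qed.

Lemma valid_completes rules n cs :
  valid rules -> completes rules n cs -> valid (rules ++ map snd cs).
Proof.
elim: cs rules => [|[w [l r]] cs IH] rules ok /=; first by rewrite cats0.
case/andP=> /(valid_joined_from ok) lr /(IH (rcons rules (l, r))).
rewrite cat_rcons; apply=> l' r'; rewrite mem_rcons inE.
by case/predU1P=> [[-> ->] //|]; apply: ok.
Qed.

End Rewriting.

Definition gen_eqb (a b : gen) : bool :=
  match a, b with gU, gU | gP, gP | gL, gL => true | _, _ => false end.
Lemma gen_eqP : Equality.axiom gen_eqb.
Proof. by case; case; constructor. Qed.
HB.instance Definition _ := hasDecEq.Build gen gen_eqP.

Definition gens : seq gen := [:: U; P; L].
Lemma mem_gens g : g \in gens. Proof. by case: g. Qed.

Lemma InP (A : eqType) (a : A) s : reflect (List.In a s) (a \in s).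
Proof.
elim: s => [|b s IH] /=; first by constructor.
by rewrite inE; apply: (iffP predU1P) => [[->|/IH]|[->|/IH]]; auto.
Qed.

Lemma pres_cong_ctx u v w1 w2 :
  pres_cong w1 w2 -> pres_cong (u ++ w1 ++ v) (u ++ w2 ++ v).
Proof.
elim=> [l r u' v' lr_in | w | a b _ | a b c _ IH1 _ IH2].
- by have := pc_rel (u ++ u') (v' ++ v) lr_in; rewrite -!catA.
- exact: pc_refl.
- exact: pc_sym.
- exact: pc_trans IH2.
Qed.

Lemma pres_cong_rel l r : (l, r) \in presentation_rels -> pres_cong l r.
Proof. by move/InP/(pc_rel [::] [::]); rewrite /= !cats0. Qed.

(* The defining relations oriented by shortlex order with U < P < L. *)
Definition upl_base_rules : seq (seq gen * seq gen) :=
 [:: ([:: P; P], [::]);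
     ([:: L; L], [::]);
     ([:: L; P; L], [:: P; L; P]);
     ([:: U; U; U], [:: U]);
     ([:: U; L], [:: U; P]);
     ([:: L; U], [:: P; U]);
     ([:: P; U; U; P; U; U; P], [:: U; U; P; U; U]);
     ([:: P; U; P; U; P; U; U; P], [:: U; P; U; P; U; U]);
     ([:: P; U; U; P; U; P; U; P], [:: U; U; P; U; P; U])].

(* Knuth-Bendix completion of the base rules: each new rule is attached to the
   overlap word from which both of its sides are reached. *)
Definition upl_completion : seq (seq gen * (seq gen * seq gen)) :=
 [:: ([:: P; P; U; U; P; U; U; P], ([:: P; U; U; P; U; U], [:: U; U; P; U; U; P]));
     ([:: P; P; U; P; U; P; U; U; P], ([:: P; U; P; U; P; U; U], [:: U; P; U; P; U; U; P]));
     ([:: P; P; U; U; P; U; P; U; P], ([:: P; U; U; P; U; P; U], [:: U; U; P; U; P; U; P]));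
     ([:: L; L; U], ([:: L; P; U], [:: U]));
     ([:: U; L; L], ([:: U; P; L], [:: U]));
     ([:: P; U; U; P; U; U; P; U; P; U; P; U; U; P], ([:: U; P; U; P; U; U], [:: U; U; P; U; P; U]));
     ([:: P; U; P; U; P; U; U; P; U; P; U; P; U; U; P],
        ([:: P; U; P; U; P; U; P; U; P], [:: U; P; U; P; U; P; U]));
     ([:: P; P; U; P; U; P; U; P; U; P], ([:: P; U; P; U; P; U; P; U], [:: U; P; U; P; U; P; U; P]));
     ([:: P; U; U; P; U; U; U], ([:: U; U; P; U; U; P; U], [:: P; U; U; P; U]));
     ([:: P; U; P; U; P; U; U; P; U; U; P; U], ([:: U; U; P; U; P; U; P; U], [:: P; U; P; U; P; U]))].

Definition upl_rules := upl_base_rules ++ map snd upl_completion.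

Definition upl_fuel := 8.

Lemma valid_upl_rules : valid pres_cong upl_rules.
Proof.
apply: (valid_completes pc_refl pc_sym pc_trans pres_cong_ctx (n := upl_fuel));
  last by vm_compute.
have base_ok : all (fun lr => (lr \in presentation_rels) || ((lr.2, lr.1) \in presentation_rels))
                   upl_base_rules by vm_compute.
move=> l r /(allP base_ok) /orP [/pres_cong_rel //|/pres_cong_rel]; exact: pc_sym.
Qed.

Fixpoint words n : seq (seq gen) :=
  if n is n'.+1 then [seq g :: w | g <- gens, w <- words n'] else [:: [::]].

Definition upl_normal_forms : seq (seq gen) :=
  [seq w <- flatten [seq words n | n <- iota 0 9] | nilp (rewrites upl_rules w)].

Definition nf (w : seq gen) : seq gen :=
  foldl (fun s g => normalize upl_rules upl_fuel (rcons s g)) [::] w.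

Lemma nf_rcons w g : nf (rcons w g) = normalize upl_rules upl_fuel (rcons (nf w) g).
Proof. by rewrite /nf -cats1 foldl_cat. Qed.

Lemma nf_normal_form w : nf w \in upl_normal_forms.
Proof.
have closed : all (fun s => all (fun g => normalize upl_rules upl_fuel (rcons s g)
                                        \in upl_normal_forms) gens) upl_normal_forms.
  by vm_compute.
elim/last_ind: w => [|w g IH]; first by vm_compute.
by rewrite nf_rcons; apply: (allP (allP closed _ IH)); apply: mem_gens.
Qed.

Lemma pres_cong_nf w : pres_cong w (nf w).
Proof.
elim/last_ind: w => [|w g IH]; first exact: pc_refl.
rewrite nf_rcons -!cats1.
apply: pc_trans (pres_cong_ctx [::] [:: g] IH) _.
exact: (valid_normalize pc_refl pc_trans pres_cong_ctx _ _ valid_upl_rules).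
Qed.

Lemma comp_idl (R : hrel) : comp idrel R = R.
Proof.
apply/setP=> [[x z]]; rewrite inE /=; apply/existsP/idP=> [[y /andP [xy]]|xz].
  by rewrite inE /= => /eqP <-.
by exists z; rewrite xz inE /=.
Qed.

Lemma compA (A B C : hrel) : comp A (comp B C) = comp (comp A B) C.
Proof.
apply/setP=> [[x z]]; rewrite !inE /=; apply/existsP/existsP.
  case=> y /andP [+ yz]; rewrite inE /= => /existsP [t /andP [xt ty]].
  by exists t; rewrite xt inE /=; apply/existsP; exists y; rewrite ty.
case=> y /andP [xy +]; rewrite inE /= => /existsP [t /andP [yt tz]].
by exists t; rewrite tz andbT inE /=; apply/existsP; exists y; rewrite xy.
Qed.

Lemma eval_cat w1 w2 : eval (w1 ++ w2) = comp (eval w1) (eval w2).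
Proof. by elim: w1 => [|g w1 IH] /=; rewrite ?comp_idl // IH compA. Qed.

Definition gen_adj (g : gen) : rel H :=
  match g with gU => relU | gP => relP | gL => relL end.

Lemma mem_gen_rel g x y : ((x, y) \in gen_rel g) = gen_adj g x y.
Proof. by case: g; rewrite inE. Qed.

(* [enum H] does not reduce under [vm_compute]; this enumeration does. *)
Definition ords n : seq 'I_n := pmap (@insub_eq nat _ 'I_n) (iota 0 n).

Lemma mem_ords n (i : 'I_n) : i \in ords n.
Proof. by rewrite /ords (eq_pmap (@insub_eqE nat _ 'I_n)) mem_ord_enum. Qed.

Definition enum_H : seq H :=
  [seq inl (inl i) | i <- ords 12] ++ [seq inl (inr i) | i <- ords 12] ++ [seq inr i | i <- ords 4].

Lemma mem_enum_H (x : H) : x \in enum_H.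
Proof. by rewrite !mem_cat; case: x => [[i|i]|i]; rewrite map_f ?orbT ?mem_ords. Qed.

Fixpoint image (w : seq gen) (x : H) : seq H :=
  if w is g :: w' then
    let ys := image w' x in [seq z <- enum_H | has (gen_adj g ^~ z) ys]
  else [seq z <- enum_H | x == z].

Lemma mem_image w x z : (z \in image w x) = ((x, z) \in eval w).
Proof.
elim: w z => [|g w IH] z; rewrite mem_filter mem_enum_H andbT [eval _]/= inE //.
apply/hasP/existsP=> [[y xy yz]|[y /andP [xy yz]]]; exists y.
- by rewrite -IH xy mem_gen_rel.
- by rewrite IH.
- by rewrite -mem_gen_rel.
Qed.

Definition row (R : hrel) (x : H) : seq H := [seq z <- enum_H | (x, z) \in R].

Lemma mem_row R x z : (z \in row R x) = ((x, z) \in R).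
Proof. by rewrite mem_filter mem_enum_H andbT. Qed.

Definition rows (R : hrel) : seq (seq H) := map (row R) enum_H.

Lemma rows_inj : injective rows.
Proof.
move=> R1 R2 /eq_in_map eqR; apply/setP=> [[x z]].
by rewrite -!mem_row eqR ?mem_enum_H.
Qed.

Lemma image_row w x : image w x = row (eval w) x.
Proof.
by case: w => [|g w]; apply: eq_filter=> z; rewrite -mem_image mem_filter mem_enum_H andbT.
Qed.

Lemma rows_eval w : rows (eval w) = map (image w) enum_H.
Proof. by apply: eq_map=> x; rewrite image_row. Qed.

Lemma eval_presentation_rel l r : List.In (l, r) presentation_rels -> eval l = eval r.
Proof.
have tables_eq : all (fun lr => map (image lr.1) enum_H == map (image lr.2) enum_H)
                     presentation_rels by vm_compute.
by move/InP/(allP tables_eq)/eqP; rewrite -!rows_eval; apply: rows_inj.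
Qed.

Lemma pres_cong_eval w1 w2 : pres_cong w1 w2 -> eval w1 = eval w2.
Proof.
elim=> [l r u v /eval_presentation_rel lr | w | {}w1 {}w2 _ -> | {}w1 w w3 _ -> _ ->] //.
by rewrite !eval_cat lr.
Qed.

Lemma uniq_map_inj_in (A B : eqType) (f : A -> B) s :
  uniq (map f s) -> {in s &, injective f}.
Proof.
elim: s => //= a s IH /andP [fa_notin uniq_fs] x y.
rewrite !inE => /predU1P [->|xs] /predU1P [->|ys] // fxy.
- by rewrite fxy map_f in fa_notin.
- by rewrite -fxy map_f in fa_notin.
- exact: IH.
Qed.

Lemma uniq_rows_eval_normal_forms : uniq (map rows (map eval upl_normal_forms)).
Proof. by rewrite -map_comp (eq_map rows_eval); vm_compute. Qed.

Lemma eval_inj_normal_forms : {in upl_normal_forms &, injective eval}.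
Proof.
move=> w1 w2 in1 in2 eq12; have := uniq_rows_eval_normal_forms; rewrite -map_comp.
move/uniq_map_inj_in/(_ w1 w2 in1 in2); apply.
by rewrite -[LHS]/(rows (eval w1)) eq12.
Qed.

Theorem mainTheorem1 :
  (exists s : seq hrel, uniq s /\ size s = 40 /\ (forall R : hrel, R \in s <-> inM R)) /\
  (forall w1 w2 : seq gen, eval w1 = eval w2 <-> pres_cong w1 w2).
Proof.
have eval_nf w : eval (nf w) = eval w by rewrite (pres_cong_eval (pres_cong_nf w)).
split.
  exists (map eval upl_normal_forms); split; first exact: map_uniq uniq_rows_eval_normal_forms.
  split; first by rewrite size_map; vm_compute.
  move=> R; split=> [/mapP [w _ ->]|[w <-]]; first by exists w.
  by rewrite -eval_nf map_f ?nf_normal_form.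
move=> w1 w2; split=> [eq12|]; last exact: pres_cong_eval.
have nf12 : nf w1 = nf w2.
  by apply: eval_inj_normal_forms; rewrite ?nf_normal_form ?eval_nf.
by apply: pc_trans (pres_cong_nf w1) _; rewrite nf12; apply: pc_sym (pres_cong_nf w2).
Qed.
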